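(* Let $\phi:\mathbb{R}^N\to\mathbb{R}$ be a bounded Borel function with $\phi\in C^{1,1}(x)$ and $p_x\neq0$. Then $$\mathcal{L}_s[\phi](x)=\int_0^\infty L_\phi\Big(x,t\frac{p_x}{|p_x|},t\frac{p_x}{|p_x|}\Big)\,\mathrm{d}\mu_s(t).$$
   Context: Fix $N\ge1$ and $s\in(\frac12,1)$. Let $C_s=\frac{4^s s\,\Gamma(\frac12+s)}{\pi^{1/2}\Gamma(1-s)}$. Let $\mu_s$ be the Borel measure on $(0,\infty)$ with $\mathrm{d}\mu_s(t)=C_s t^{-1-2s}\,\mathrm{d}t$. For $\phi:\mathbb{R}^N\to\mathbb{R}$ and $x,y,\tilde y\in\mathbb{R}^N$ let $L_\phi(x,y,\tilde y)=\phi(x+y)+\phi(x-\tilde y)-2\phi(x)$. Define $$\mathcal{L}_s[\phi](x)=\sup_{|y|=1}\inf_{|\tilde y|=1}\int_0^\infty L_\phi(x,ty,t\tilde y)\,\mathrm{d}\mu_s(t),$$ where $\int_0^\infty$ means $\lim_{\delta\to0^+}\int_\delta^\infty$ (a value in $[-\infty,\infty]$). We say $\phi\in C^{1,1}(x)$ if there exist $p_x\in\mathbb{R}^N$ and $C_x,\eta_x>0$ with $|\phi(x+y)-\phi(x)-\langle p_x,y\rangle|\le C_x|y|^2$ for all $|y|<\eta_x$. *)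

(* R^N is rendered as row vectors 'rV[R]_N over an
   arbitrary realType R, with the EUCLIDEAN norm defined below (the library's
   norm on matrices is the sup norm, so we do not use it). *)
From HB Require Import structures.
From mathcomp Require Import all_boot all_order all_algebra.
From mathcomp Require Import all_classical all_reals all_analysis.
Set Implicit Arguments. Unset Strict Implicit. Unset Printing Implicit Defensive.
Import Order.TTheory GRing.Theory Num.Theory.
Import numFieldNormedType.Exports.
Local Open Scope classical_set_scope.
Local Open Scope ring_scope.

Section Defs.
Variable R : realType.
Variable N : nat.

Definition dotp (u v : 'rV[R]_N) : R := \sum_(i < N) u 0 i * v 0 i.
Definition enorm (v : 'rV[R]_N) : R := Num.sqrt (dotp v v).

Definition usphere : set 'rV[R]_N := [set y | enorm y = 1].

Definition borel_fun (phi : 'rV[R]_N -> R) : Prop :=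
  forall B : set R, measurable B ->
    <<s [set U : set 'rV[R]_N | open U] >> (phi @^-1` B).

Definition bounded_fun_on (phi : 'rV[R]_N -> R) : Prop :=
  exists M : R, forall z, `|phi z| <= M.

Definition C11_at (phi : 'rV[R]_N -> R) (x p : 'rV[R]_N) (C eta : R) : Prop :=
  0 < C /\ 0 < eta /\
  forall y, enorm y < eta ->
    `|phi (x + y) - phi x - dotp p y| <= C * enorm y ^+ 2.

Definition Lphi (phi : 'rV[R]_N -> R) (x y yt : 'rV[R]_N) : R :=
  phi (x + y) + phi (x - yt) - 2 * phi x.
End Defs.

Section Consts.
Variable R : realType.
Definition Gamma (z : R) : R :=
  Rintegral lebesgue_measure `]0, +oo[ (fun t => t `^ (z - 1) * expR (- t)).

Definition Cs (s : R) : R :=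
  (4 `^ s * s * Gamma (2^-1 + s)) / (Num.sqrt pi * Gamma (1 - s)).

Definition mus_dens (s t : R) : R := Cs s * t `^ (-1 - 2 * s).

Definition int_mus (s : R) (f : R -> R) : \bar R :=
  lim ((fun delta : R =>
          (\int[lebesgue_measure]_(t in `]delta, +oo[) (f t * mus_dens s t)%:E)%E)
       @ 0^'+).
End Consts.

Definition Ls (R : realType) (N : nat) (s : R) (phi : 'rV[R]_N -> R)
  (x : 'rV[R]_N) : \bar R :=
  ereal_sup [set ereal_inf [set int_mus s (fun t => Lphi phi x (t *: y) (t *: yt))
                           | yt in @usphere R N] | y in @usphere R N].

(* Write I(y, yt) for the mu_s-integral of t |-> L_phi(x, t y, t yt) over
   unit vectors y, yt.  By the C^{1,1} hypothesis, near t = 0 the second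
   difference equals t D + O(t^2) with slope D = <p, y> - <p, yt>.  Since
   2s > 1, the measure mu_s is not integrable against t near 0, while the
   bounded integrand is harmless away from 0; hence I(y, yt) = +oo if D > 0
   and -oo if D < 0.  By Cauchy-Schwarz, u is the unique maximiser of <p, .>
   on the sphere, so I(u, yt) = +oo for yt <> u and I(y, u) = -oo for y <> u:
   (u, u) is a saddle point and sup_y inf_yt I(y, yt) = I(u, u). *)
From HB Require Import structures.
From mathcomp Require Import all_boot all_order all_algebra.
From mathcomp Require Import all_classical all_reals all_analysis.
From mathcomp Require Import ring lra.
From mathcomp Require Import measurable_realfun.
Set Implicit Arguments. Unset Strict Implicit. Unset Printing Implicit Defensive.
Import Order.TTheory GRing.Theory Num.Theory.
Import numFieldNormedType.Exports.
Local Open Scope classical_set_scope.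
Local Open Scope ring_scope.

Section EuclideanGeometry.
Variables (R : realType) (N : nat).
Implicit Types (u v y : 'rV[R]_N) (a : R).

Lemma dotpC u v : dotp u v = dotp v u.
Proof. by apply: eq_bigr => i _; rewrite mulrC. Qed.

Lemma dotpZl a u v : dotp (a *: u) v = a * dotp u v.
Proof. by rewrite /dotp mulr_sumr; apply: eq_bigr => i _; rewrite mxE mulrA. Qed.

Lemma dotp_ge0 v : 0 <= dotp v v.
Proof. by apply: sumr_ge0 => i _; rewrite -expr2 sqr_ge0. Qed.

Lemma dotpBB u v : dotp (u - v) (u - v) = dotp u u - 2 * dotp u v + dotp v v.
Proof.
rewrite /dotp mulr_sumr -sumrB -big_split /=; apply: eq_bigr => i _.
by rewrite !mxE; ring.
Qed.

Lemma dotp_eq0 v : dotp v v = 0 -> v = 0.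
Proof.
move=> /eqP; rewrite psumr_eq0 => [/allP v0|i _]; last by rewrite -expr2 sqr_ge0.
apply/matrixP => i j; rewrite (ord1 i) mxE.
by have := v0 j (mem_index_enum j); rewrite /= mulf_eq0 orbb => /eqP.
Qed.

Lemma enorm_sqr v : enorm v ^+ 2 = dotp v v.
Proof. by rewrite sqr_sqrtr// dotp_ge0. Qed.

Lemma enormZ a v : enorm (a *: v) = `|a| * enorm v.
Proof.
rewrite /enorm dotpZl dotpC dotpZl mulrA -expr2.
by rewrite sqrtrM ?sqr_ge0// sqrtr_sqr.
Qed.

Lemma enorm_gt0 v : v != 0 -> 0 < enorm v.
Proof.
move=> v0; rewrite sqrtr_gt0 lt_def dotp_ge0 andbT.
by apply: contra_neq v0 => /dotp_eq0.
Qed.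

(* Cauchy-Schwarz on the unit sphere, with equality only at [y = u]: the
   direction [u] is the unique maximiser of [y |-> <u, y>] on the sphere *)
Lemma sphere_dotp_lt1 u y :
  enorm u = 1 -> enorm y = 1 -> y != u -> dotp u y < 1.
Proof.
move=> hu hy yu; have uu : dotp u u = 1 by rewrite -enorm_sqr hu expr1n.
have yy : dotp y y = 1 by rewrite -enorm_sqr hy expr1n.
have := dotp_ge0 (y - u); rewrite dotpBB uu yy dotpC => h.
rewrite lt_neqAle; apply/andP; split; last lra.
apply: contra_neq yu => uy; apply/eqP; rewrite -subr_eq0; apply/eqP.
by apply: dotp_eq0; rewrite dotpBB uu yy dotpC uy; lra.
Qed.
End EuclideanGeometry.

Section SecondDifference.
Variables (R : realType) (N : nat) (phi : 'rV[R]_N -> R).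

(* a Borel function composed with a continuous curve is measurable: the sets
   whose preimage under the curve is measurable form a sigma-algebra
   containing the open sets *)
Lemma borel_fun_comp (g : R -> 'rV[R]_N) :
  borel_fun phi -> continuous g -> measurable_fun setT (phi \o g).
Proof.
move=> hphi cg _ B mB; rewrite setTI comp_preimage.
pose G := [set A : set 'rV[R]_N | measurable (g @^-1` A)].
have sG : sigma_algebra setT G.
  split => [|A mA|F mF]; rewrite /G /=.
  - by rewrite preimage_set0.
  - by rewrite setTD -preimage_setC; exact: measurableC.
  - by rewrite preimage_bigcup; exact: bigcupT_measurable.
have oG : [set U : set 'rV[R]_N | open U] `<=` G.
  move=> U oU; apply: open_measurable.
  by apply: open_comp => // t _; exact: cg.
exact: (smallest_sub sG oG (hphi B mB)).
Qed.

Lemma Lphi_ray_measurable (x y yt : 'rV[R]_N) : borel_fun phi ->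
  measurable_fun setT (fun t : R => Lphi phi x (t *: y) (t *: yt)).
Proof.
move=> hphi; have line z : measurable_fun setT (fun t : R => phi (x + t *: z)).
  apply: (borel_fun_comp (g := fun t => x + t *: z)) => // t.
  have cZ : {for t, continuous (fun t : R => t *: z)}.
    by apply: continuousZr_tmp; exact: cvg_id.
  have cx : {for t, continuous (cst x : R -> 'rV[R]_N)} by exact: cst_continuous.
  exact: (continuousD cx cZ).
rewrite /Lphi; under eq_fun do rewrite -scalerN.
by apply: measurable_funB; [exact: measurable_funD|exact: measurable_cst].
Qed.

Lemma Lphi_bound (M : R) (x y yt : 'rV[R]_N) :
  (forall z, `|phi z| <= M) -> `|Lphi phi x y yt| <= 4 * M.
Proof.
move=> hM; rewrite /Lphi.
apply: le_trans (ler_normB _ _) _; rewrite normrM ger0_norm//.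
apply: le_trans (lerD (ler_normD _ _) (lexx _)) _.
by have := hM (x + y); have := hM (x - yt); have := hM x; lra.
Qed.

Lemma Lphi_first_order (x p y yt : 'rV[R]_N) (C eta : R) :
  C11_at phi x p C eta -> enorm y = 1 -> enorm yt = 1 ->
  forall t, 0 < t < eta ->
  `|Lphi phi x (t *: y) (t *: yt) - t * (dotp p y - dotp p yt)|
    <= 2 * C * t ^+ 2.
Proof.
move=> [C0 [_ hC]] hy hyt t /andP[t0 te].
have := hC (t *: y); have := hC ((- t) *: yt).
rewrite !enormZ hy hyt normrN gtr0_norm// mulr1 => /(_ te) hb /(_ te) ha.
rewrite dotpC dotpZl dotpC in ha; rewrite dotpC dotpZl dotpC scaleNr in hb.
rewrite /Lphi.
set a := phi (x + t *: y) - phi x - t * dotp p y in ha.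
set b := phi (x + - (t *: yt)) - phi x - - t * dotp p yt in hb.
have -> : phi (x + t *: y) + phi (x - t *: yt) - 2 * phi x -
   t * (dotp p y - dotp p yt) = a + b by rewrite /a /b; ring.
apply: le_trans (ler_normD _ _) _; lra.
Qed.
End SecondDifference.

Section Powers.
Variable R : realType.

Lemma powR_antitone (u v e : R) : 0 < u -> u <= v -> e <= 0 -> v `^ e <= u `^ e.
Proof.
move=> u0 uv e0; have v0 : 0 < v by apply: lt_le_trans uv.
rewrite /powR !gt_eqF// ler_expR; apply: ler_wnM2l => //.
by rewrite ler_ln ?posrE.
Qed.

Lemma powR_mulr (t r : R) : 0 < t -> t `^ r * t = t `^ (r + 1).
Proof.
by move=> t0; rewrite powRD ?powRr1 ?ltW//; apply/implyP => _; rewrite gt_eqF.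
Qed.

(* away from 0, a power [t^-a] with [a >= 2] is dominated by a multiple of
   the integrable function [1 / (1 + t^2)] *)
Lemma powR_le_oneDsqrV (a t0 t : R) : 2 <= a -> 0 < t0 -> t0 <= t ->
  t `^ (- a) <= (t0 `^ (- a) + t0 `^ (2 - a)) * (oneDsqr t)^-1.
Proof.
move=> a2 t00 tt0; have t0' : 0 < t by apply: lt_le_trans tt0.
rewrite ler_pdivlMr; last by rewrite /oneDsqr ltr_pwDl// sqr_ge0.
have -> : t `^ (- a) * oneDsqr t = t `^ (- a) + t `^ (2 - a).
  rewrite addrC powRD; last by apply/implyP => _; rewrite gt_eqF.
  by rewrite powR_mulrn ?ltW// /oneDsqr; ring.
by apply: lerD; apply: powR_antitone => //; lra.
Qed.
End Powers.

Section Density.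
Variable R : realType.
Implicit Type s : R.

Lemma Gamma_ge0 (z : R) : 0 <= Gamma z.
Proof.
apply: fine_ge0; apply: integral_ge0 => t _.
by rewrite lee_fin mulr_ge0 ?powR_ge0 ?expR_ge0.
Qed.

Lemma Cs_ge0 s : 0 <= s -> 0 <= Cs s.
Proof. by move=> s0; rewrite divr_ge0 ?mulr_ge0 ?powR_ge0 ?Gamma_ge0 ?sqrtr_ge0. Qed.

Lemma mus_dens_ge0 s t : 0 <= Cs s -> 0 <= mus_dens s t.
Proof. by move=> c0; rewrite mulr_ge0// powR_ge0. Qed.

Lemma mus_weighted_measurable s (f : R -> R) : measurable_fun setT f ->
  measurable_fun setT (fun t => (f t * mus_dens s t)%:E).
Proof.
move=> mf; apply/measurable_EFinP; apply: measurable_funM => //.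
by apply: measurable_funM; [exact: measurable_cst|exact: measurable_powR].
Qed.

Lemma int_mus_Cs0 s (f : R -> R) : Cs s = 0 -> int_mus s f = 0%E.
Proof.
move=> c0; rewrite /int_mus /mus_dens c0.
under eq_fun do under eq_integral do rewrite mul0r mulr0.
by apply: cvg_lim => //; under eq_fun do rewrite integral0; exact: cvg_cst.
Qed.
End Density.

Section TruncatedIntegrals.
Variables (R : realType) (s : R) (f : R -> R).
Hypothesis hs : 2^-1 < s.
Hypothesis mf : measurable_fun setT f.
Local Notation mu := (@lebesgue_measure R).
Local Notation F := (fun t => (f t * mus_dens s t)%:E).

Let s2_gt1 : 1 < 2 * s.
Proof. by rewrite -ltr_pdivrMl// mulr1. Qed.

Let mF : measurable_fun setT F := mus_weighted_measurable s mf.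

(* a bounded [f] that is nonnegative near 0 has a negative part whose
   truncated [mu_s]-integrals stay bounded: away from 0 the density is
   dominated by a multiple of [1 / (1 + t^2)], whose integral is [pi / 2] *)
Lemma neg_part_tail_bounded (B t0 : R) : 0 <= Cs s ->
  (forall t, `|f t| <= B) -> 0 < t0 -> (forall t, 0 < t < t0 -> 0 <= f t) ->
  exists T : R, forall δ, 0 < δ ->
    (\int[mu]_(t in `]δ, +oo[) F^\- t <= T%:E)%E.
Proof.
move=> c0 fB t00 fpos.
have B0 : 0 <= B by apply: le_trans (fB 0); exact: normr_ge0.
set k := B * Cs s * (t0 `^ (- (1 + 2 * s)) + t0 `^ (2 - (1 + 2 * s))).
have k0 : 0 <= k.
  by apply: mulr_ge0; [exact: mulr_ge0|rewrite addr_ge0 ?powR_ge0].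
have o0 t : 0 < oneDsqr t by rewrite /oneDsqr ltr_pwDl// sqr_ge0.
have mi : measurable_fun setT (fun t : R => (oneDsqr t)^-1).
  by apply: continuous_measurable_fun; exact: continuous_oneDsqrV.
have mg : measurable_fun setT (fun t : R => (k * (oneDsqr t)^-1)%:E).
  by apply/measurable_EFinP; apply: measurable_funM => //; exact: measurable_cst.
exists (k * (pi / 2)) => δ δ0.
have dominated t : δ < t -> (F^\- t <= (k * (oneDsqr t)^-1)%:E)%E.
  move=> δt; have t0' : 0 < t by apply: lt_trans δt.
  rewrite funenegE -EFinN -EFin_max lee_fin ge_max.
  have kg : 0 <= k / oneDsqr t by rewrite mulr_ge0 // invr_ge0 ltW.
  rewrite kg andbT; have [tt0|t0t] := ltP t t0.
    apply: le_trans kg; rewrite oppr_le0 mulr_ge0 ?mus_dens_ge0//.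
    by apply: fpos; rewrite t0' tt0.
  apply: (@le_trans _ _ (B * mus_dens s t)).
    rewrite -mulNr ler_wpM2r ?mus_dens_ge0//.
    by apply: le_trans (fB t); rewrite -normrN ler_norm.
  rewrite /k /mus_dens -(mulrA B) -mulrA; apply: ler_wpM2l => //.
  rewrite -mulrA; apply: ler_wpM2l => //.
  rewrite (_ : -1 - 2 * s = - (1 + 2 * s)); last by ring.
  by apply: powR_le_oneDsqrV => //; have := s2_gt1; lra.
apply: (@le_trans _ _ (\int[mu]_(t in `[0%R, +oo[) (k * (oneDsqr t)^-1)%:E)%E).
  apply: (@le_trans _ _ (\int[mu]_(t in `]δ, +oo[) (k * (oneDsqr t)^-1)%:E)%E).
    apply: ge0_le_integral => //.
    - exact: measurable_funS (measurable_funeneg mF).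
    - exact: measurable_funS mg.
    by move=> t /=; rewrite in_itv /= andbT; exact: dominated.
  apply: ge0_subset_integral => //.
  - exact: measurable_funS mg.
  - by move=> t _; rewrite lee_fin mulr_ge0 // invr_ge0 ltW.
  - by move=> t /=; rewrite !in_itv /= !andbT => /ltW; exact: le_trans (ltW δ0).
under eq_integral do rewrite EFinM.
rewrite ge0_integralZl_EFin// ?integral0y_oneDsqr//.
by apply/measurable_EFinP; exact: measurable_funS mi.
Qed.

Lemma pos_part_lower (d t0 δ : R) : 0 < Cs s -> 0 < d ->
  (forall t, 0 < t < t0 -> d * t <= f t) -> 0 < δ -> 2 * δ <= t0 ->
  ((d * Cs s / 2 * (2 * δ) `^ (1 - 2 * s))%:E
     <= \int[mu]_(t in `]δ, +oo[) F^\+ t)%E.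
Proof.
move=> c0 d0 fge δ0 δt0; have δ2 : 0 < 2 * δ by rewrite mulr_gt0.
set v := d * Cs s * (2 * δ) `^ (- (2 * s)).
have v0 : 0 <= v by rewrite mulr_ge0 ?powR_ge0// ltW// mulr_gt0.
have below t : δ < t < 2 * δ -> (v%:E <= F^\+ t)%E.
  move=> /andP[δt t2]; have t0' : 0 < t by apply: lt_trans δt.
  rewrite funeposE -EFin_max lee_fin le_max; apply/orP; left.
  apply: (@le_trans _ _ (d * t * mus_dens s t)); last first.
    apply: ler_wpM2r; first by rewrite mus_dens_ge0// ltW.
    by apply: fge; rewrite t0' (lt_le_trans t2).
  have -> : d * t * mus_dens s t = d * Cs s * t `^ (- (2 * s)).
    rewrite /mus_dens [RHS](_ : _ = d * Cs s * t `^ ((-1 - 2 * s) + 1)); last first.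
      by congr (_ * _ `^ _); ring.
    by rewrite -powR_mulr//; ring.
  apply: ler_wpM2l; first by rewrite ltW// mulr_gt0.
  by apply: powR_antitone => //; [exact: ltW|have := s2_gt1; lra].
apply: (@le_trans _ _ (\int[mu]_(t in `]δ, (2 * δ)%R[) F^\+ t)%E); last first.
  apply: ge0_subset_integral => //.
  - exact: measurable_funS (measurable_funepos mF).
  - by move=> t /=; rewrite !in_itv /= andbT => /andP[].
apply: (@le_trans _ _ (\int[mu]_(t in `]δ, (2 * δ)%R[) (cst v%:E t))%E).
  rewrite integral_cst //= lebesgue_measure_itv /= lte_fin.
  rewrite ltr_pMl ?ltr1n// -EFinB -EFinM lee_fin /v.
  rewrite (_ : 1 - 2 * s = - (2 * s) + 1); last by ring.
  by rewrite -powR_mulr// le_eqVlt; apply/orP; left; apply/eqP; field.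
by apply: ge0_le_integral => //; exact: measurable_funS (measurable_funepos mF).
Qed.

(* since [1 - 2s < 0], the truncated integrals of the positive part are
   unbounded as [delta -> 0+] *)
Lemma pos_part_unbounded (d t0 : R) : 0 < Cs s -> 0 < d -> 0 < t0 ->
  (forall t, 0 < t < t0 -> d * t <= f t) ->
  forall M : R, \forall δ \near 0^'+,
    (M%:E <= \int[mu]_(t in `]δ, +oo[) F^\+ t)%E.
Proof.
move=> c0 d0 t00 fge M.
have e0 : 1 - 2 * s < 0 by have := s2_gt1; lra.
set c := d * Cs s / 2; have cpos : 0 < c by apply: divr_gt0 => //; exact: mulr_gt0.
set X := Num.max 1 (M / c); have X0 : 0 < X by rewrite /X lt_max ltr01.
have MX : M <= c * X by rewrite mulrC -ler_pdivrMr// le_max lexx orbT.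
(* below [eps] the power [t^(1 - 2s)] exceeds [X] *)
set eps := X `^ (1 - 2 * s)^-1; have eps0 : 0 < eps by rewrite powR_gt0.
have epsX : eps `^ (1 - 2 * s) = X.
  by rewrite -powRrM mulVf ?lt_eqF// powRr1// ltW.
near=> δ.
have δ0 : 0 < δ by near: δ; exact: nbhs_right_gt.
have δ2 : 2 * δ <= Num.min t0 eps.
  rewrite -ler_pdivlMl//; apply/ltW; near: δ; apply: nbhs_right_lt.
  by rewrite mulr_gt0 ?invr_gt0// lt_min t00 eps0.
apply: le_trans (pos_part_lower c0 d0 fge δ0 _); last first.
  by apply: le_trans δ2 _; rewrite ge_min lexx.
rewrite lee_fin (le_trans MX)//; apply: ler_wpM2l; first exact: ltW.
rewrite -epsX; apply: powR_antitone; [by rewrite mulr_gt0| |exact: ltW].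
by apply: le_trans δ2 _; rewrite ge_min lexx orbT.
Unshelve. all: by end_near.
Qed.
End TruncatedIntegrals.

Section TruncatedLimits.
Variable R : realType.
Local Notation mu := (@lebesgue_measure R).

(* a bounded measurable [f] with [f t >= d t] near 0 has [mu_s]-integral
   [+oo]: the positive part blows up while the negative part stays bounded *)
Lemma int_mus_pinfty (s : R) (f : R -> R) (B d t0 : R) :
  2^-1 < s -> 0 < Cs s -> measurable_fun setT f -> (forall t, `|f t| <= B) ->
  0 < d -> 0 < t0 -> (forall t, 0 < t < t0 -> d * t <= f t) ->
  int_mus s f = +oo%E.
Proof.
move=> hs c0 mf fB d0 t00 fge.
have fpos t : 0 < t < t0 -> 0 <= f t.
  by move=> /[dup] /andP[t0' _] /fge; apply: le_trans; rewrite mulr_ge0// ltW.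
have [T negT] := neg_part_tail_bounded hs mf (ltW c0) fB t00 fpos.
apply: cvg_lim => //; apply/cvgeyPge => A.
near=> δ; have δ0 : 0 < δ by near: δ; exact: nbhs_right_gt.
rewrite integralE -[A](addrK T) EFinB; apply: leeB (negT δ δ0).
by near: δ; exact: (pos_part_unbounded hs mf c0 d0 t00 fge).
Unshelve. all: by end_near.
Qed.

(* the mirror statement, obtained by applying the estimates to [- f] *)
Lemma int_mus_ninfty (s : R) (f : R -> R) (B d t0 : R) :
  2^-1 < s -> 0 < Cs s -> measurable_fun setT f -> (forall t, `|f t| <= B) ->
  0 < d -> 0 < t0 -> (forall t, 0 < t < t0 -> f t <= - (d * t)) ->
  int_mus s f = -oo%E.
Proof.
move=> hs c0 mf fB d0 t00 fle.
have mg : measurable_fun setT (fun t => - f t) by exact: measurableT_comp.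
have gB t : `|- f t| <= B by rewrite normrN.
have gge t : 0 < t < t0 -> d * t <= - f t by move=> /fle; rewrite lerNr.
have gpos t : 0 < t < t0 -> 0 <= - f t.
  by move=> /[dup] /andP[t0' _] /gge; apply: le_trans; rewrite mulr_ge0// ltW.
have [T negT] := neg_part_tail_bounded hs mg (ltW c0) gB t00 gpos.
have NF : (fun t => (- f t * mus_dens s t)%:E) =
          (\- (fun t => (f t * mus_dens s t)%:E))%E.
  by apply/funext => t; rewrite /= mulNr EFinN.
have posT := pos_part_unbounded hs mg c0 d0 t00 gge.
rewrite NF funenegN in negT; rewrite NF funeposN in posT.
apply: cvg_lim => //; apply/cvgeNyPle => A.
near=> δ; have δ0 : 0 < δ by near: δ; exact: nbhs_right_gt.
have : ((T - A)%:E <= \int[mu]_(t in `]δ, +oo[)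
          ((fun t => (f t * mus_dens s t)%:E)^\- t))%E.
  by near: δ; exact: posT.
move=> /(leeB (negT δ δ0)); rewrite -EFinB (_ : T - (T - A) = A); last by ring.
by rewrite [in X in _ -> X]integralE.
Unshelve. all: by end_near.
Qed.
End TruncatedLimits.

Section RayIntegrals.
Variables (R : realType) (N : nat) (phi : 'rV[R]_N -> R).

Lemma Lphi_ray_linear (x p y yt : 'rV[R]_N) (C eta : R) :
  C11_at phi x p C eta -> enorm y = 1 -> enorm yt = 1 ->
  dotp p y - dotp p yt != 0 ->
  exists2 t0 : R, 0 < t0 & forall t, 0 < t < t0 ->
    `|Lphi phi x (t *: y) (t *: yt) - t * (dotp p y - dotp p yt)|
      <= `|dotp p y - dotp p yt| / 2 * t.
Proof.
move=> hC hy hyt D0; have [C0 [eta0 _]] := hC.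
set D := dotp p y - dotp p yt in D0 *.
have D0' : 0 < `|D| by rewrite normr_gt0.
exists (Num.min eta (`|D| / (4 * C))) => [|t /andP[t0 tt0]].
  by rewrite lt_min eta0 divr_gt0// mulr_gt0.
have te : t < eta by apply: lt_le_trans tt0 _; rewrite ge_min lexx.
have tD : 4 * C * t <= `|D|.
  rewrite mulrC -ler_pdivlMr ?mulr_gt0//; apply/ltW/(lt_le_trans tt0).
  by rewrite ge_min lexx orbT.
apply: le_trans (Lphi_first_order hC hy hyt _) _; first by rewrite t0 te.
rewrite expr2 mulrA -subr_ge0 -mulrBl; apply: mulr_ge0; [lra|exact: ltW].
Qed.

(* a nonzero slope forces the [mu_s]-integral of the second difference to be
   infinite, with the sign of the slope, because [mu_s] is not integrable
   against [t] near 0 *)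
Lemma int_mus_ray_infinite (s : R) (x p y yt : 'rV[R]_N) (C eta : R) :
  2^-1 < s -> 0 < Cs s -> bounded_fun_on phi -> borel_fun phi ->
  C11_at phi x p C eta -> enorm y = 1 -> enorm yt = 1 ->
  dotp p y - dotp p yt != 0 ->
  int_mus s (fun t => Lphi phi x (t *: y) (t *: yt)) =
  if 0 < dotp p y - dotp p yt then +oo%E else -oo%E.
Proof.
move=> hs c0 [M hM] hphi hC hy hyt D0.
have [t0 t00 lin] := Lphi_ray_linear hC hy hyt D0.
set D := dotp p y - dotp p yt in D0 lin *.
have mL := Lphi_ray_measurable x y yt hphi.
have LB t := Lphi_bound x (t *: y) (t *: yt) hM.
have [Dpos|Dneg] := ltP 0 D.
  apply: (int_mus_pinfty hs c0 mL LB (d := D / 2)) t00 _ => [|t /lin].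
    by rewrite divr_gt0.
  by rewrite (gtr0_norm Dpos) ler_distlC => /andP[_]; lra.
have {Dneg}Dneg : D < 0 by rewrite lt_neqAle D0 Dneg.
apply: (int_mus_ninfty hs c0 mL LB (d := - D / 2)) t00 _ => [|t /lin].
  by rewrite divr_gt0// oppr_gt0.
by rewrite (ltr0_norm Dneg) ler_distlC => /andP[+ _]; lra.
Qed.
End RayIntegrals.

Lemma ereal_sup_inf_saddle (R : realType) (V : Type) (S : set V)
  (I : V -> V -> \bar R) (u : V) :
  S u -> (forall yt, S yt -> (I u u <= I u yt)%E) ->
  (forall y, S y -> exists2 yt, S yt & (I y yt <= I u u)%E) ->
  ereal_sup [set ereal_inf [set I y yt | yt in S] | y in S] = I u u.
Proof.
move=> Su umin ybelow; apply/eqP; rewrite eq_le; apply/andP; split.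
  apply: ub_ereal_sup => _ [y Sy <-]; have [yt Syt le] := ybelow y Sy.
  by apply: le_trans le; apply: ereal_inf_lbound; exists yt.
apply: (@le_trans _ _ (ereal_inf [set I u yt | yt in S])).
  by apply: le_ereal_inf_tmp => _ [yt Syt <-]; exact: umin.
by apply: ereal_sup_ubound; exists u.
Qed.

Theorem proposition2p2 (R : realType) (N : nat) (hN : (1 <= N)%N) (s : R)
  (hs1 : 2^-1 < s) (hs2 : s < 1)
  (phi : 'rV[R]_N -> R) (hb : bounded_fun_on phi) (hm : borel_fun phi)
  (x p : 'rV[R]_N) (C eta : R) (hC : C11_at phi x p C eta) (hp : p != 0) :
  Ls s phi x =
  int_mus s (fun t => Lphi phi x (t *: ((enorm p)^-1 *: p))
                                 (t *: ((enorm p)^-1 *: p))).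
Proof.
have p0 := enorm_gt0 hp; set u := (enorm p)^-1 *: p.
have hu : enorm u = 1.
  by rewrite enormZ ger0_norm ?invr_ge0 ?(ltW p0)// mulVf ?gt_eqF.
have pdot y : dotp p y = enorm p * dotp u y.
  by rewrite dotpZl mulrA divff ?gt_eqF// mul1r.
have uu : dotp u u = 1 by rewrite -enorm_sqr hu expr1n.
have Cs_cases : Cs s = 0 \/ 0 < Cs s.
  have s0 : 0 <= s by apply: le_trans (ltW hs1); rewrite invr_ge0.
  by have := Cs_ge0 s0; rewrite le_eqVlt => /orP[/eqP<-|]; [left|right].
pose I y yt := int_mus s (fun t => Lphi phi x (t *: y) (t *: yt)).
rewrite /Ls; apply: (ereal_sup_inf_saddle (I := I) hu) => [yt hyt|y hy].
- have [c0|c0] := Cs_cases; first by rewrite /I !int_mus_Cs0.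
  have [->//|ne] := eqVneq yt u.
  have D : 0 < dotp p u - dotp p yt.
    by rewrite !pdot uu -mulrBr mulr_gt0// subr_gt0 sphere_dotp_lt1.
  rewrite /I (int_mus_ray_infinite hs1 c0 hb hm hC hu hyt (lt0r_neq0 D)).
  by rewrite D leey.
- exists u => //; have [c0|c0] := Cs_cases; first by rewrite /I !int_mus_Cs0.
  have [->//|ne] := eqVneq y u.
  have D : dotp p y - dotp p u < 0.
    by rewrite !pdot uu -mulrBr pmulr_rlt0// subr_lt0 sphere_dotp_lt1.
  rewrite /I (int_mus_ray_infinite hs1 c0 hb hm hC hy hu (ltr0_neq0 D)).
  by rewrite ltNge (ltW D) leNye.
Qed.
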